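(* Let $q$ be a prime power and $h\geq 2$. Let $\vec u,\vec v,\vec w$ be three $\mathbb{F}_{q^h}$-linearly independent vectors in $\mathbb{F}_{q^h}^3$, and let $f:\mathbb{F}_{q^h}\to\mathbb{F}_q$ be a nonzero $\mathbb{F}_q$-linear functional. Define $U=\{x\vec u+f(x)\vec v+y\vec w : x\in\mathbb{F}_{q^h},\ y\in\mathbb{F}_q\}$. Then $\mathcal{L}_U$ is a blocking set of $\mathrm{PG}(2,q^h)$ of size $q^h+q^{h-1}+1$.
   Context: For an $\mathbb{F}_q$-subspace $U$ of $\mathbb{F}_{q^h}^3$, $\mathcal{L}_U=\{\langle\vec z\rangle_{\mathbb{F}_{q^h}} : \vec z\in U\setminus\{0\}\}$, viewed as a set of points of $\mathrm{PG}(2,q^h)$. A blocking set is a point set meeting every line. *)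

From HB Require Import structures.
From mathcomp Require Import all_boot all_order all_algebra all_field.
Set Implicit Arguments. Unset Strict Implicit. Unset Printing Implicit Defensive.
Import GRing.Theory.
Local Open Scope ring_scope.

(* F plays the role of F_q, L the role of F_{q^h} (a finite-dimensional
   field extension of F). Points of PG(2,L) are 1-dimensional L-subspaces
   of L^3 = 'rV[L]_3, represented canonically by <<z>>%MS; lines are
   2-dimensional subspaces, represented by square matrices of rank 2. *)

Definition inU (F : finFieldType) (L : fieldExtType F) (f : L -> F)
  (u v w : 'rV[L]_3) (z : 'rV[L]_3) : Prop :=
  exists (x : L) (y : F), z = x *: u + (f x)%:A *: v + (y%:A : L) *: w.

Definition LU (F : finFieldType) (L : fieldExtType F) (f : L -> F)
  (u v w : 'rV[L]_3) (P : 'M[L]_3) : Prop :=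
  exists z : 'rV[L]_3, inU f u v w z /\ z != 0 /\ P = <<z>>%MS.

Definition blocking_set (L : fieldType) (S : 'M[L]_3 -> Prop) : Prop :=
  forall l : 'M[L]_3, \rank l = 2%N ->
    exists P : 'M[L]_3, S P /\ (P <= l)%MS.

Definition has_size (L : fieldType) (S : 'M[L]_3 -> Prop) (n : nat) : Prop :=
  exists s : seq 'M[L]_3, [/\ uniq s, (forall P, P \in s <-> S P) & size s = n].

From HB Require Import structures.
From mathcomp Require Import all_boot all_order all_algebra all_field.
Import GRing.Theory.
Set Implicit Arguments.
Unset Strict Implicit.
Unset Printing Implicit Defensive.

Local Open Scope ring_scope.

(* In coordinates with respect to the basis u, v, w, the points of L_U are
   <(x, f x, y)>.  Normalising, they are <(1,0,0)> (f x = 0, y = 0), the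
   <(k,0,1)> with f k = 0 (f x = 0, y <> 0), and the <(k + e, 1, t)> with
   f k = 0, t in F and f e = 1 (f x <> 0); these are pairwise distinct and
   ker f has q^(h-1) elements, whence 1 + q^(h-1) + q^h points.  A line is
   the kernel of a rank-one map M; if M kills w then <w> is on it, otherwise
   it reads x a + f(x) b + y = 0, and the F-linear map x |-> x a + f(x) b of
   the finite set L is either non-injective (a point with y = 0) or
   bijective (solve for the value 1 and take y = -1). *)

Lemma rank1_mulmx_proportional (K : fieldType) n (M : 'M[K]_n) (r s : 'rV_n) :
  \rank M = 1%N -> s *m M != 0 -> exists a, r *m M = a *: (s *m M).
Proof.
move=> rkM sM_neq0; apply/sub_rVP; apply: submx_trans (submxMl r M) _.
by rewrite -(mxrank_leqif_sup (submxMl s M)).2 rank_rV sM_neq0 rkM.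
Qed.

Lemma fin_additive_ker_or_bij (V : finZmodType) (g : V -> V) :
  {morph g : x y / x - y} -> (exists2 x, x != 0 & g x = 0) \/ bijective g.
Proof.
move=> gB; have [x /andP[x_neq0 /eqP gx0] | no_ker] :=
  pickP (fun x => (x != 0) && (g x == 0)); first by left; exists x.
right; apply: injF_bij => x y gxy; apply/eqP; rewrite -subr_eq0.
by apply: contraFT (no_ker (x - y)) => ->; rewrite /= gB gxy subrr.
Qed.

Section Frame.
Variables (K : fieldType) (u v w : 'rV[K]_3).
Hypothesis frame_free : row_free (col_mx u (col_mx v w)).

Definition frame_vec (a b c : K) := a *: u + b *: v + c *: w.

Lemma frame_vecE a b c :
  frame_vec a b c = row_mx a%:M (row_mx b%:M c%:M) *m col_mx u (col_mx v w).
Proof. by rewrite !mul_row_col !mul_scalar_mx addrA. Qed.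

Lemma frame_vec_inj a b c a' b' c' :
  frame_vec a b c = frame_vec a' b' c' -> [/\ a = a', b = b' & c = c'].
Proof.
have scalar1_inj (x y : K) : (x%:M : 'M_1) = y%:M -> x = y.
  by move/matrixP/(_ 0 0); rewrite !mxE.
rewrite !frame_vecE => /(row_free_inj frame_free).
by case/eq_row_mx=> /scalar1_inj-> /eq_row_mx[/scalar1_inj-> /scalar1_inj->].
Qed.

Lemma frame_vec_eq0 a b c :
  (frame_vec a b c == 0) = [&& a == 0, b == 0 & c == 0].
Proof.
have vec0 : frame_vec 0 0 0 = 0 by rewrite /frame_vec !scale0r !addr0.
apply/eqP/and3P => [|[/eqP-> /eqP-> /eqP->] //].
by rewrite -vec0 => /frame_vec_inj[-> -> ->].
Qed.

Lemma frame_vecZ k a b c :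
  k *: frame_vec a b c = frame_vec (k * a) (k * b) (k * c).
Proof. by rewrite /frame_vec !scalerDr !scalerA. Qed.

Lemma genmx_frame_vecZ k a b c : k != 0 ->
  <<frame_vec (k * a) (k * b) (k * c)>>%MS = <<frame_vec a b c>>%MS.
Proof. by move=> k_neq0; rewrite -frame_vecZ; apply/eq_genmx/eqmx_scale. Qed.

Lemma genmx_frame_vec_eq a b c a' b' c' :
  <<frame_vec a b c>>%MS = <<frame_vec a' b' c'>>%MS ->
  exists k, [/\ a = k * a', b = k * b' & c = k * c'].
Proof.
move=> eq_pts; have : (frame_vec a b c <= frame_vec a' b' c')%MS.
  by rewrite -genmxE eq_pts genmxE.
by case/sub_rVP=> k; rewrite frame_vecZ => /frame_vec_inj[-> -> ->]; exists k.
Qed.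

End Frame.

Lemma dim_lker_functional (K : fieldType) (V : vectType K) (phi : 'Hom(V, K^o)) x :
  phi x != 0 -> \dim (lker phi) = (\dim {:V}).-1.
Proof.
move=> phix_neq0; have := limg_ker_dim phi fullv; rewrite capfv.
suff -> : \dim (limg phi) = 1%N by move=> <-; rewrite addn1.
apply/eqP; rewrite eqn_leq -[1%N in X in X && _](dimvf K^o) dimvS ?subvf //=.
rewrite lt0n dimv_eq0 -subv0; apply: contra phix_neq0 => /subvP/(_ (phi x)).
by rewrite memv_img ?memvf // memv0 => /(_ isT).
Qed.

Lemma fin_additive_hits_scalar (F : finFieldType) (L : fieldExtType F) (g : L -> L) :
  {morph g : x y / x - y} -> exists x (t : F), x != 0 /\ g x = t%:A.
Proof.
move=> gB; have g0 : g 0 = 0 by rewrite -[X in g X](subrr 0) gB subrr.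
have [[x x_neq0 gx0] | [g' _ g'K]] :=
  fin_additive_ker_or_bij (V := finvect_type L) gB.
  by exists x, 0; rewrite scale0r.
exists (g' 1), 1; rewrite scale1r g'K; split=> //.
by apply: contra_eq_neq (g'K 1) => ->; rewrite g0 eq_sym oner_neq0.
Qed.

Section LinearSet.
Variables (F : finFieldType) (L : fieldExtType F).
Variables (u v w : 'rV[L]_3) (f : L -> F).
Hypothesis frame_free : row_free (col_mx u (col_mx v w)).
Hypothesis f_linear : forall (a : F) (x y : L), f (a *: x + y) = a * f x + f y.
Local Notation T := (finvect_type L).
Local Notation vec := (frame_vec u v w).

HB.instance Definition _ := GRing.isLinear.Build F L F^o _ (f : L -> F^o) f_linear.

Let f0 : f 0 = 0. Proof. exact: linear0. Qed.
Let fD x y : f (x + y) = f x + f y. Proof. exact: linearD. Qed.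
Let fB x y : f (x - y) = f x - f y. Proof. exact: linearB. Qed.
Let fZ a x : f (a *: x) = a * f x. Proof. exact: linearZ. Qed.

Local Notation kerv := (lker (linfun (f : L -> F^o))).

Definition kerf : {pred T} := fun x => f x == 0.

Lemma card_kerf x : f x != 0 -> #|kerf| = (#|F| ^ (\dim {:L}).-1)%N.
Proof.
move=> fx_neq0.
rewrite -(@dim_lker_functional _ _ (linfun (f : L -> F^o)) x) ?lfunE //.
rewrite -(card_vspace (kerv : {vspace T})); apply: eq_card => y.
by rewrite (@memv_ker _ T) lfunE.
Qed.

Lemma kerf_nontrivial x : (1 < \dim {:L})%N -> f x != 0 ->
  exists2 k, k != 0 & f k = 0.
Proof.
move=> dim_gt1 fx_neq0; exists (vpick kerv).
  rewrite vpick0 -dimv_eq0 (@dim_lker_functional _ _ _ x) ?lfunE //.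
  by rewrite -lt0n -ltnS prednK // ltnW.
by have := memv_pick kerv; rewrite memv_ker lfunE => /eqP.
Qed.

Lemma LU_frameP P : LU f u v w P <->
  exists x y, vec x (f x)%:A y%:A != 0 /\ P = <<vec x (f x)%:A y%:A>>%MS.
Proof.
split=> [[_ [[x [y ->]] [z_neq0 ->]]] | [x [y [z_neq0 ->]]]]; first by exists x, y.
by exists (vec x (f x)%:A y%:A); split=> //; exists x, y.
Qed.

Lemma LU_blocking : blocking_set (LU f u v w).
Proof.
move=> l rank_l; set M := cokermx l.
have vecM x b c : vec x b c *m M = x *: (u *m M) + b *: (v *m M) + c *: (w *m M).
  by rewrite /frame_vec !mulmxDl -!scalemxAl.
suff [x [y [z_neq0 zM]]] : exists x y,
    vec x (f x)%:A y%:A != 0 /\ vec x (f x)%:A y%:A *m M = 0.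
  exists <<vec x (f x)%:A y%:A>>%MS; split; first by apply/LU_frameP; exists x, y.
  by rewrite genmxE submxE zM.
have [wM0 | wM_neq0] := eqVneq (w *m M) 0.
  exists 0, 1; rewrite f0 (frame_vec_eq0 frame_free) scale1r oner_eq0 !andbF.
  by split=> //; rewrite vecM wM0 !scale0r !scaler0 !addr0.
have rank_M : \rank M = 1%N by rewrite mxrank_coker rank_l.
have [a uM] := rank1_mulmx_proportional u rank_M wM_neq0.
have [b vM] := rank1_mulmx_proportional v rank_M wM_neq0.
pose g x := x * a + (f x)%:A * b.
have gB : {morph g : x y / x - y}.
  by move=> x y; rewrite /g fB scalerBl !mulrBl addrACA opprD.
have [x [t [x_neq0 gx]]] := fin_additive_hits_scalar gB.
exists x, (- t); rewrite (frame_vec_eq0 frame_free) (negPf x_neq0); split=> //.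
rewrite vecM uM vM !scalerA -!scalerDl.
by rewrite [_ + _ * b]gx scaleNr subrr scale0r.
Qed.

Definition LU_points (e : L) : seq 'M[L]_3 :=
  <<vec 1 0 0>>%MS :: [seq <<vec k 0 1>>%MS | k : T <- enum kerf] ++
  [seq <<vec (k + e) 1 t%:A>>%MS | k : T <- enum kerf, t <- enum F].

Lemma size_LU_points e :
  size (LU_points e) = (1 + #|kerf| + #|kerf| * #|F|)%N.
Proof. by rewrite /= size_cat size_map size_allpairs !cardE -addnA add1n. Qed.

Lemma uniq_LU_points e : uniq (LU_points e).
Proof.
have vec_eq := genmx_frame_vec_eq frame_free.
have uniq_kerf : uniq (enum kerf) by exact: enum_uniq.
rewrite /= mem_cat negb_or cat_uniq -andbA; apply/and5P; split.
- apply/mapP=> -[k _ /vec_eq[c [c1 _ c0]]].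
  by move: c1; rewrite -[c]mulr1 -c0 !mul0r => /eqP; rewrite oner_eq0.
- apply/allpairsP=> -[[k t] [_ _ /vec_eq[c [c1 c0 _]]]].
  by move: c1; rewrite -[c]mulr1 -c0 !mul0r => /eqP; rewrite oner_eq0.
- rewrite map_inj_in_uniq ?uniq_kerf // => k k' _ _ /vec_eq[c [-> _ c1]].
  by rewrite -[c]mulr1 -c1 mul1r.
- apply/hasPn=> _ /allpairsP[[k t] [_ _ ->]]; apply/mapP=> -[k' _ /vec_eq[c [_]]].
  by rewrite mulr0 => /eqP; rewrite oner_eq0.
- rewrite allpairs_uniq ?uniq_kerf ?enum_uniq //.
  move=> -[k t] [k' t'] _ _ /vec_eq[c [ke c1 tt']].
  by move: ke tt'; rewrite -[c]mulr1 -c1 !mul1r => /addIr-> /(fmorph_inj (in_alg L))->.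
Qed.

Lemma LU_points_sub e k0 P : f e = 1 -> k0 != 0 -> f k0 = 0 ->
  P \in LU_points e -> LU f u v w P.
Proof.
move=> fe k0_neq0 fk0; rewrite inE mem_cat.
have vec_eq0 := frame_vec_eq0 frame_free.
case/or3P=> [/eqP-> | /mapP[k] | /allpairsP[[k t] [/=]]].
- apply/LU_frameP; exists k0, 0; rewrite fk0 !scale0r vec_eq0 (negPf k0_neq0).
  by rewrite -(genmx_frame_vecZ u v w 1 0 0 k0_neq0) mulr1 !mulr0.
- rewrite mem_enum => /eqP fk ->; apply/LU_frameP.
  by exists k, 1; rewrite fk scale0r scale1r vec_eq0 oner_eq0 !andbF.
- rewrite mem_enum => /eqP fk _ ->; apply/LU_frameP.
  exists (k + e), t; rewrite fD fk fe add0r scale1r.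
  by rewrite vec_eq0 oner_eq0 andFb andbF.
Qed.

Lemma LU_sub_points e P : f e = 1 -> LU f u v w P -> P \in LU_points e.
Proof.
move=> fe /LU_frameP[x [y [z_neq0 ->]]]; rewrite inE mem_cat.
have vecZ (c : F) a b d : c != 0 ->
    <<vec a b d>>%MS = <<vec (c *: a) (c *: b) (c *: d)>>%MS.
  move=> c_neq0; rewrite -(@genmx_frame_vecZ _ u v w c%:A) ?mulr_algl //.
  by rewrite scaler_eq0 oner_eq0 orbF.
have [fx0 | fx_neq0] := eqVneq (f x) 0.
  have [y0 | y_neq0] := eqVneq y 0.
    have x_neq0 : x != 0.
      apply: contraNneq z_neq0 => x0.
      by rewrite x0 f0 y0 scale0r (frame_vec_eq0 frame_free) eqxx.
    rewrite fx0 y0 scale0r -(genmx_frame_vecZ u v w 1 0 0 x_neq0) mulr1 !mulr0.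
    by rewrite eqxx.
  rewrite [<<vec x _ _>>%MS](vecZ y^-1) ?invr_eq0 // fx0 scale0r scaler0.
  rewrite scalerA mulVf // scale1r; apply/or3P; apply: Or32; apply/mapP.
  by exists (y^-1 *: x) => //; rewrite mem_enum; apply/eqP; rewrite fZ fx0 mulr0.
rewrite [<<vec x _ _>>%MS](vecZ (f x)^-1) ?invr_eq0 // !scalerA mulVf // scale1r.
apply/or3P; apply: Or33; apply/allpairsP.
exists ((f x)^-1 *: x - e : T, (f x)^-1 * y); rewrite /= subrK !mem_enum; split=> //.
by apply/eqP; rewrite fB fZ mulVf // fe subrr.
Qed.

Lemma LU_has_size x : (1 < \dim {:L})%N -> f x != 0 ->
  has_size (LU f u v w) (#|F| ^ \dim {:L} + #|F| ^ (\dim {:L}).-1 + 1)%N.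
Proof.
move=> dim_gt1 fx_neq0.
have [k0 k0_neq0 fk0] := kerf_nontrivial dim_gt1 fx_neq0.
have fe : f ((f x)^-1 *: x) = 1 by rewrite fZ mulVf.
exists (LU_points ((f x)^-1 *: x)); split; first exact: uniq_LU_points.
  by move=> P; split; [apply: LU_points_sub fe k0_neq0 fk0 | apply: LU_sub_points].
rewrite size_LU_points (card_kerf fx_neq0) -expnSr prednK ?(ltnW dim_gt1) //.
by rewrite -addnA add1n addn1 addnC.
Qed.

End LinearSet.

Theorem lemma3p2 (F : finFieldType) (L : fieldExtType F)
  (u v w : 'rV[L]_3) (f : L -> F) :
  (2 <= \dim {:L})%N ->
  row_free (col_mx u (col_mx v w)) ->
  (forall (a : F) (x y : L), f (a *: x + y) = a * f x + f y) ->
  (exists x : L, f x != 0) ->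
  blocking_set (LU f u v w) /\
  has_size (LU f u v w)
    (#|F| ^ \dim {:L} + #|F| ^ (\dim {:L}).-1 + 1)%N.
Proof.
move=> dim_ge2 frame_free f_linear [x fx_neq0]; split.
  exact: LU_blocking.
exact: LU_has_size fx_neq0.
Qed.
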